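(* There exists $\theta_1\in(0,\pi/8)$, depending only on $\alpha$, such that for every $\theta\in(0,\theta_1)$ the following holds. If $p,q\in\mathbb H$ satisfy $z_q\le0$, $z_p\le0$, $\rho_q\le\rho_p$, $p,q\in\mathcal C(\theta)$, $q\notin B(p,r_p)$ and $p\notin B(q,r_q)$, then $z_q<2z_p$ and $\rho_q<\rho_p\cos(2\theta)$.
   Context: $\mathbb H=\mathbb R^3$, $p=(x_p,y_p,z_p)$, $\rho_p=\sqrt{x_p^2+y_p^2}$, group law $(x,y,z)\cdot(x',y',z')=(x+x',y+y',z+z'+\tfrac12(xy'-yx'))$, dilations $\delta_\lambda(x,y,z)=(\lambda x,\lambda y,\lambda^2z)$. Fix $\alpha>0$ such that $d_\alpha(p,q)=\inf\{r>0:\delta_{1/r}(p^{-1}\cdot q)\in B_\alpha\}$ is a distance, $B_\alpha$ the closed Euclidean ball of radius $\alpha$ at $0$. $B(p,r)=\{q:d_\alpha(q,p)\le r\}$, $r_p=d_\alpha(0,p)$. $\mathcal C(\theta)=\{p:|y_p|<x_p\tan\theta\}$. *)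

From Stdlib Require Import Reals Lra ClassicalEpsilon.
Open Scope R_scope.

(* Points of the Heisenberg group H = R^3 *)
Record pt : Type := mkpt { xc : R; yc : R; zc : R }.

Definition origin : pt := mkpt 0 0 0.

Definition hmul (p q : pt) : pt :=
  mkpt (xc p + xc q) (yc p + yc q)
       (zc p + zc q + / 2 * (xc p * yc q - yc p * xc q)).

Definition hinv (p : pt) : pt := mkpt (- xc p) (- yc p) (- zc p).

Definition dil (l : R) (p : pt) : pt := mkpt (l * xc p) (l * yc p) (l * l * zc p).

Definition inBalpha (a : R) (p : pt) : Prop :=
  xc p * xc p + yc p * yc p + zc p * zc p <= a * a.

Definition dset (a : R) (p q : pt) (r : R) : Prop :=
  0 < r /\ inBalpha a (dil (/ r) (hmul (hinv p) q)).

Definition is_glb (E : R -> Prop) (m : R) : Prop :=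
  (forall r, E r -> m <= r) /\ (forall b, (forall r, E r -> b <= r) -> b <= m).

Definition dalpha (a : R) (p q : pt) : R :=
  epsilon (inhabits 0) (fun m => is_glb (dset a p q) m).

Definition is_distance (d : pt -> pt -> R) : Prop :=
  (forall p q, 0 <= d p q) /\
  (forall p q, d p q = 0 <-> p = q) /\
  (forall p q, d p q = d q p) /\
  (forall p q w, d p w <= d p q + d q w).

Definition inB (a : R) (p : pt) (r : R) (q : pt) : Prop := dalpha a q p <= r.

Definition rad (a : R) (p : pt) : R := dalpha a origin p.

Definition rho (p : pt) : R := sqrt (xc p * xc p + yc p * yc p).

Definition inCone (theta : R) (p : pt) : Prop := Rabs (yc p) < xc p * tan theta.

From Stdlib Require Import Reals Lra Psatz ClassicalEpsilon.
Open Scope R_scope.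

(* If q lies outside B(p, r_p), some r with r_p <= r < d(q,p) puts p in the gauge ball of
   radius r around 0 but not in the one around q.  Subtracting the two gauge inequalities
   (with L = r^-2) gives 2<p,q> - |q|^2 < L (w^2 - z_p^2), w the height of q^-1 p.  In the
   cone C(theta) the horizontal parts are nearly parallel, so <p,q> is close to
   rho_p rho_q, while w differs from z_p - z_q by at most tan(theta) rho_p rho_q.  If
   z_q >= 2 z_p the right-hand side is O(tan theta) rho_p rho_q, which is too small.  The
   same computation with the ball around q, now knowing z_q <= z_p, rules out
   rho_q >= rho_p cos(2 theta). *)

Definition hnorm2 (p : pt) : R := xc p * xc p + yc p * yc p.

Definition hdot (p q : pt) : R := xc p * xc q + yc p * yc q.

Lemma rho_sqr (p : pt) : rho p * rho p = hnorm2 p.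
Proof. apply sqrt_sqrt; unfold hnorm2; nra. Qed.

Lemma hnorm2_hmul_hinv (p q : pt) :
  hnorm2 (hmul (hinv p) q) = hnorm2 p + hnorm2 q - 2 * hdot p q.
Proof. unfold hnorm2, hdot; simpl; ring. Qed.

Lemma hmul_hinv_origin (p : pt) : hmul (hinv origin) p = p.
Proof. destruct p; unfold hmul; simpl; f_equal; ring. Qed.

Lemma inBalpha_dil (a l : R) (g : pt) :
  inBalpha a (dil l g) <->
  l * l * hnorm2 g + (l * l) * (l * l) * (zc g * zc g) <= a * a.
Proof.
  unfold inBalpha, hnorm2; simpl.
  replace (l * xc g * (l * xc g) + l * yc g * (l * yc g) + l * l * zc g * (l * l * zc g))
    with (l * l * (xc g * xc g + yc g * yc g) + l * l * (l * l) * (zc g * zc g)) by ring.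
  reflexivity.
Qed.

Lemma glb_exists (E : R -> Prop) (b : R) :
  (exists r, E r) -> (forall r, E r -> b <= r) -> exists m, is_glb E m.
Proof.
  intros [r0 Er0] hb.
  destruct (completeness (fun y => E (- y))) as [m [hub hlub]].
  - exists (- b). intros y Ey. specialize (hb _ Ey). lra.
  - exists (- r0). rewrite Ropp_involutive. exact Er0.
  - exists (- m). split.
    + intros r Er. assert (- r <= m) by (apply hub; rewrite Ropp_involutive; exact Er). lra.
    + intros c hc. assert (m <= - c); [|lra].
      apply hlub. intros y Ey. specialize (hc _ Ey). lra.
Qed.

Lemma dset_nonempty (a : R) (p q : pt) : 0 < a -> exists r, dset a p q r.
Proof.
  intros ha. set (g := hmul (hinv p) q).
  set (K := hnorm2 g + zc g * zc g).
  assert (K0 : 0 <= K) by (unfold K, hnorm2; nra).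
  set (r := 1 + K * / (a * a)).
  assert (ia : 0 < / (a * a)) by (apply Rinv_0_lt_compat; nra).
  assert (hKr : K <= a * a * r).
  { unfold r. rewrite Rmult_plus_distr_l, <- Rmult_assoc, Rinv_r_simpl_m; nra. }
  assert (r1 : 1 <= r) by (unfold r; nra).
  exists r. split; [lra|]. apply inBalpha_dil. fold g.
  set (l := / r).
  assert (hl : l * r = 1) by (unfold l; field; lra).
  assert (l0 : 0 < l) by (unfold l; apply Rinv_0_lt_compat; lra).
  assert (l2 : 0 < l * l <= l) by (split; nra).
  assert (0 <= hnorm2 g) by (unfold hnorm2; nra).
  assert (l * K <= a * a) by nra.
  assert ((l * l) * (l * l) * (zc g * zc g) <= l * l * (zc g * zc g))
    by (apply Rmult_le_compat_r; nra).
  assert (l * l * K <= l * K) by (apply Rmult_le_compat_r; lra).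
  unfold K in *. nra.
Qed.

Lemma dalpha_is_glb (a : R) (p q : pt) : 0 < a -> is_glb (dset a p q) (dalpha a p q).
Proof.
  intros ha. unfold dalpha. apply epsilon_spec.
  apply (glb_exists _ 0); [exact (dset_nonempty a p q ha)|].
  intros r [hr _]. lra.
Qed.

Lemma separated_excess (a : R) (p q : pt) :
  0 < a -> ~ inB a p (rad a p) q ->
  exists L, 0 < L /\
    L * hnorm2 p + L * L * (zc p * zc p) <= a * a /\
    2 * hdot p q - hnorm2 q <
      L * (zc (hmul (hinv q) p) * zc (hmul (hinv q) p) - zc p * zc p).
Proof.
  intros ha hout. unfold inB, rad in hout. apply Rnot_le_lt in hout.
  destruct (dalpha_is_glb a origin p ha) as [_ hrad].
  destruct (dalpha_is_glb a q p ha) as [hdist _].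
  assert (hr : exists r, dset a origin p r /\ r < dalpha a q p).
  { apply NNPP. intros hno.
    assert (dalpha a q p <= dalpha a origin p); [|lra].
    apply hrad. intros r hr. apply Rnot_lt_le. intros hlt. apply hno. now exists r. }
  destruct hr as [r [[r0 hin] hlt]].
  assert (hnot : ~ inBalpha a (dil (/ r) (hmul (hinv q) p))).
  { intros hq. specialize (hdist r (conj r0 hq)). lra. }
  rewrite hmul_hinv_origin, inBalpha_dil in hin.
  rewrite inBalpha_dil, hnorm2_hmul_hinv in hnot. apply Rnot_le_lt in hnot.
  exists (/ r * / r). split; [apply Rmult_lt_0_compat; apply Rinv_0_lt_compat; lra|].
  split; [exact hin|].
  replace (hdot q p) with (hdot p q) in hnot by (unfold hdot; ring).
  nra.
Qed.

Definition in_cone (t : R) (p : pt) : Prop := Rabs (yc p) < xc p * t.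

Lemma cone_xc_pos (t : R) (p : pt) : 0 < t -> in_cone t p -> 0 < xc p.
Proof. unfold in_cone. pose proof (Rabs_pos (yc p)). nra. Qed.

Lemma cone_rho_pos (t : R) (p : pt) : 0 < t -> in_cone t p -> 0 < rho p.
Proof.
  intros ht hp. pose proof (cone_xc_pos t p ht hp).
  apply sqrt_lt_R0. unfold hnorm2. nra.
Qed.

Lemma xc_le_rho (p : pt) : xc p <= rho p.
Proof.
  pose proof (rho_sqr p). pose proof (sqrt_pos (hnorm2 p)).
  unfold hnorm2, rho in *. nra.
Qed.

Lemma cone_rho_sqr_le (t : R) (p : pt) :
  0 < t -> in_cone t p -> rho p * rho p <= xc p * xc p * (1 + t * t).
Proof.
  intros ht hp. pose proof (cone_xc_pos t p ht hp).
  rewrite rho_sqr. unfold hnorm2. unfold in_cone in hp. apply Rabs_def2 in hp. nra.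
Qed.

Lemma cone_rho_mul_le (t : R) (p q : pt) : 0 < t -> in_cone t p -> in_cone t q ->
  rho p * rho q <= xc p * xc q * (1 + t * t).
Proof.
  intros ht hp hq.
  pose proof (cone_rho_sqr_le t p ht hp). pose proof (cone_rho_sqr_le t q ht hq).
  pose proof (cone_xc_pos t p ht hp). pose proof (cone_xc_pos t q ht hq).
  apply Rsqr_incr_0_var; [|nra]. unfold Rsqr.
  replace (rho p * rho q * (rho p * rho q)) with ((rho p * rho p) * (rho q * rho q)) by ring.
  replace (xc p * xc q * (1 + t * t) * (xc p * xc q * (1 + t * t)))
    with ((xc p * xc p * (1 + t * t)) * (xc q * xc q * (1 + t * t))) by ring.
  apply Rmult_le_compat; nra.
Qed.

Lemma cone_hdot_ge (t : R) (p q : pt) : 0 < t <= 1 -> in_cone t p -> in_cone t q ->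
  rho p * rho q * (1 - t * t) <= hdot p q * (1 + t * t).
Proof.
  intros [ht ht1] hp hq.
  pose proof (cone_rho_mul_le t p q ht hp hq).
  pose proof (cone_xc_pos t p ht hp). pose proof (cone_xc_pos t q ht hq).
  assert (hxy : xc p * xc q * (1 - t * t) <= hdot p q).
  { unfold in_cone, hdot in *. apply Rabs_def2 in hp. apply Rabs_def2 in hq. nra. }
  assert (rho p * rho q * (1 - t * t) <= xc p * xc q * (1 + t * t) * (1 - t * t))
    by (apply Rmult_le_compat_r; nra).
  nra.
Qed.

Lemma cone_zc_hmul_hinv (t : R) (p q : pt) : 0 < t -> in_cone t p -> in_cone t q ->
  Rabs (zc (hmul (hinv p) q) - (zc q - zc p)) <= t * (rho p * rho q).
Proof.
  intros ht hp hq.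
  pose proof (cone_xc_pos t p ht hp). pose proof (cone_xc_pos t q ht hq).
  assert (hx : xc p * xc q <= rho p * rho q)
    by (apply Rmult_le_compat; try apply xc_le_rho; lra).
  unfold in_cone in *. apply Rabs_def2 in hp. apply Rabs_def2 in hq.
  simpl. apply Rabs_le. split; nra.
Qed.

Lemma vertical_excess_le (a L z w k : R) :
  0 < a -> 0 < L -> L * L * (z * z) <= a * a -> z <= 0 -> 0 <= k ->
  Rabs w <= - z + k -> L * (w * w - z * z) <= k * (2 * a + L * k).
Proof.
  intros ha hL hz hz0 hk hw.
  assert (hLz : L * - z <= a) by nra.
  assert (hw2 : w * w - z * z <= 2 * - z * k + k * k)
    by (unfold Rabs in hw; destruct (Rcase_abs w); nra).
  assert (L * (w * w - z * z) <= L * (2 * - z * k + k * k))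
    by (apply Rmult_le_compat_l; lra).
  assert (L * - z * k <= a * k) by (apply Rmult_le_compat_r; lra).
  nra.
Qed.

Lemma small_angle_bounds (t s : R) : 0 <= t -> 8 * t <= 1 -> 0 <= s -> 8 * s <= 1 ->
  s * (2 + s) * (1 + t * t) < 1 - 3 * (t * t) /\
  s * (2 + s) * ((1 + t * t) * (1 + t * t)) <
    2 * ((1 - t * t) * (1 - t * t)) - (1 + t * t) * (1 + t * t).
Proof.
  intros. assert (0 <= t * t <= 1 / 64) by (split; nra).
  assert (0 <= s * (2 + s) <= 17 / 64) by (split; nra).
  split; nra.
Qed.

Lemma cone_separated_bound (a t L : R) (p q : pt) :
  0 < a -> 0 < t -> in_cone t p -> in_cone t q -> zc p <= 0 ->
  Rabs (zc q - zc p) <= - zc p ->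
  0 < L -> L * hnorm2 p + L * L * (zc p * zc p) <= a * a ->
  2 * hdot p q - hnorm2 q <
    L * (zc (hmul (hinv q) p) * zc (hmul (hinv q) p) - zc p * zc p) ->
  2 * hdot p q - hnorm2 q <
    t * (rho q * rho p) * (2 * a + L * (t * (rho q * rho p))).
Proof.
  intros ha ht hp hq hzp hzqp hL hball hesc.
  set (k := t * (rho q * rho p)).
  pose proof (cone_rho_pos t p ht hp). pose proof (cone_rho_pos t q ht hq).
  assert (hk : 0 <= k) by (unfold k; apply Rmult_le_pos; [lra|]; apply Rmult_le_pos; lra).
  pose proof (cone_zc_hmul_hinv t q p ht hq hp) as hW.
  fold k in hW.
  assert (hW' : Rabs (zc (hmul (hinv q) p)) <= - zc p + k).
  { replace (zc (hmul (hinv q) p))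
      with ((zc (hmul (hinv q) p) - (zc p - zc q)) + (zc p - zc q)) by ring.
    pose proof (Rabs_minus_sym (zc p) (zc q)).
    eapply Rle_trans; [apply Rabs_triang|]. lra. }
  assert (hz : L * L * (zc p * zc p) <= a * a) by (unfold hnorm2 in hball; nra).
  pose proof (vertical_excess_le a L (zc p) _ k ha hL hz hzp hk hW').
  lra.
Qed.

Lemma cone_separated_zc_lt (a t L : R) (p q : pt) :
  0 < a -> 0 < t -> 8 * t <= 1 -> 8 * (t * a) <= 1 ->
  in_cone t p -> in_cone t q -> zc q <= 0 -> zc p <= 0 -> rho q <= rho p ->
  0 < L -> L * hnorm2 p + L * L * (zc p * zc p) <= a * a ->
  2 * hdot p q - hnorm2 q <
    L * (zc (hmul (hinv q) p) * zc (hmul (hinv q) p) - zc p * zc p) ->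
  zc q < 2 * zc p.
Proof.
  intros ha ht ht8 hs8 hp hq hzq hzp hrho hL hball hesc.
  apply Rnot_le_lt. intros hz.
  assert (hzqp : Rabs (zc q - zc p) <= - zc p) by (apply Rabs_le; lra).
  pose proof (cone_separated_bound a t L p q ha ht hp hq hzp hzqp hL hball hesc) as hbound.
  pose proof (cone_hdot_ge t p q ltac:(lra) hp hq) as hdotp.
  pose proof (cone_rho_pos t p ht hp). pose proof (cone_rho_pos t q ht hq).
  destruct (small_angle_bounds t (t * a)) as [hnum _]; try nra.
  rewrite <- (rho_sqr p) in hball. rewrite <- (rho_sqr q) in hbound.
  set (rp := rho p) in *. set (rq := rho q) in *. set (s := t * a) in *.
  assert (hrq : rq * rq <= rp * rq) by (apply Rmult_le_compat_r; lra).
  assert (hLk : L * (t * (rq * rp)) * (t * (rq * rp)) <= s * s * (rp * rq)).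
  { assert (L * (rp * rp) <= a * a) by nra.
    assert (L * (rp * rp) * (t * t * (rq * rq)) <= a * a * (t * t * (rq * rq)))
      by (apply Rmult_le_compat_r; nra).
    assert (a * a * (t * t * (rq * rq)) <= a * a * (t * t * (rp * rq)))
      by (apply Rmult_le_compat_l; nra).
    unfold s. nra. }
  assert (hupper :
    (2 * hdot p q - rq * rq) * (1 + t * t) < s * (2 + s) * (1 + t * t) * (rp * rq)).
  { replace (s * (2 + s) * (1 + t * t) * (rp * rq))
      with ((2 * s * (rp * rq) + s * s * (rp * rq)) * (1 + t * t)) by ring.
    apply Rmult_lt_compat_r; [nra|].
    replace (2 * s * (rp * rq)) with (t * (rq * rp) * (2 * a)) by (unfold s; ring).
    lra. }
  assert (hlower : rp * rq * (1 - 3 * (t * t)) <= (2 * hdot p q - rq * rq) * (1 + t * t))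
    by nra.
  assert (s * (2 + s) * (1 + t * t) * (rp * rq) < (1 - 3 * (t * t)) * (rp * rq))
    by (apply Rmult_lt_compat_r; nra).
  lra.
Qed.

Lemma cone_separated_rho_lt (a t L : R) (p q : pt) :
  0 < a -> 0 < t -> 8 * t <= 1 -> 8 * (t * a) <= 1 ->
  in_cone t p -> in_cone t q -> zc q <= zc p -> zc p <= 0 -> rho q <= rho p ->
  0 < L -> L * hnorm2 q + L * L * (zc q * zc q) <= a * a ->
  2 * hdot q p - hnorm2 p <
    L * (zc (hmul (hinv p) q) * zc (hmul (hinv p) q) - zc q * zc q) ->
  rho q * (1 + t * t) < rho p * (1 - t * t).
Proof.
  intros ha ht ht8 hs8 hp hq hz hzp hrho hL hball hesc.
  apply Rnot_le_lt. intros hr.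
  assert (hzpq : Rabs (zc p - zc q) <= - zc q) by (apply Rabs_le; lra).
  pose proof (cone_separated_bound a t L q p ha ht hq hp ltac:(lra) hzpq hL hball hesc)
    as hbound.
  pose proof (cone_hdot_ge t q p ltac:(lra) hq hp) as hdotp.
  pose proof (cone_rho_pos t p ht hp). pose proof (cone_rho_pos t q ht hq).
  destruct (small_angle_bounds t (t * a)) as [_ hnum]; try nra.
  rewrite <- (rho_sqr q) in hball. rewrite <- (rho_sqr p) in hbound.
  set (rp := rho p) in *. set (rq := rho q) in *. set (s := t * a) in *.
  set (c := (1 + t * t) * (1 + t * t)).
  assert (hLk : L * (t * (rp * rq)) * (t * (rp * rq)) <= s * s * (rp * rp)).
  { assert (L * (rq * rq) <= a * a) by nra.
    assert (L * (rq * rq) * (t * t * (rp * rp)) <= a * a * (t * t * (rp * rp)))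
      by (apply Rmult_le_compat_r; nra).
    unfold s. nra. }
  assert (hka : t * (rp * rq) * (2 * a) <= 2 * s * (rp * rp)).
  { replace (2 * s * (rp * rp)) with (t * (rp * rp) * (2 * a)) by (unfold s; ring).
    apply Rmult_le_compat_r; [lra|]. apply Rmult_le_compat_l; [lra|].
    apply Rmult_le_compat_l; lra. }
  assert (hupper : (2 * hdot q p - rp * rp) * c < s * (2 + s) * c * (rp * rp)).
  { replace (s * (2 + s) * c * (rp * rp)) with ((2 * s * (rp * rp) + s * s * (rp * rp)) * c)
      by ring.
    apply Rmult_lt_compat_r; [unfold c; nra|]. lra. }
  assert (hlower : rp * rp * (2 * ((1 - t * t) * (1 - t * t)) - c)
                   <= (2 * hdot q p - rp * rp) * c).
  { assert (0 <= 1 - t * t) by nra.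
    assert (rp * (1 - t * t) * (rp * (1 - t * t)) <= rq * (1 + t * t) * (rp * (1 - t * t)))
      by (apply Rmult_le_compat_r; [apply Rmult_le_pos|]; lra).
    assert (2 * (rq * rp * (1 - t * t)) * (1 + t * t)
            <= 2 * (hdot q p * (1 + t * t)) * (1 + t * t)) by (apply Rmult_le_compat_r; nra).
    unfold c. nra. }
  assert (s * (2 + s) * c * (rp * rp) < (2 * ((1 - t * t) * (1 - t * t)) - c) * (rp * rp))
    by (apply Rmult_lt_compat_r; [nra|exact hnum]).
  lra.
Qed.

Lemma cos_2a_mul_tan (x : R) : cos x <> 0 ->
  cos (2 * x) * (1 + tan x * tan x) = 1 - tan x * tan x.
Proof.
  intros hc. unfold tan. rewrite cos_2a.
  pose proof (sin2_cos2 x) as h1. unfold Rsqr in h1.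
  replace (1 + sin x / cos x * (sin x / cos x)) with (/ (cos x * cos x))
    by (field_simplify_eq; [lra|exact hc]).
  field. exact hc.
Qed.

Lemma tan_lt_of_lt_atan (u x : R) : 0 < x < atan u -> 0 < tan x < u.
Proof.
  intros hx. destruct (atan_bound u) as [_ hu]. pose proof PI_RGT_0.
  split; [apply tan_gt_0; lra|].
  rewrite <- (tan_atan u). apply tan_increasing; lra.
Qed.

Theorem lemma2p5 (a : R) (ha : 0 < a) (hd : is_distance (dalpha a)) :
  exists theta1 : R, 0 < theta1 < PI / 8 /\
    forall theta : R, 0 < theta < theta1 ->
    forall p q : pt,
      zc q <= 0 -> zc p <= 0 -> rho q <= rho p ->
      inCone theta p -> inCone theta q ->
      ~ inB a p (rad a p) q -> ~ inB a q (rad a q) p ->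
      zc q < 2 * zc p /\ rho q < rho p * cos (2 * theta).
Proof.
  set (u := / (8 * (a + 1))).
  assert (hu : 0 < u < 1) by (unfold u; split;
    [apply Rinv_0_lt_compat; lra|rewrite <- Rinv_1; apply Rinv_lt_contravar; lra]).
  assert (hatan : 0 < atan u < PI / 4).
  { rewrite <- atan_0, <- atan_1. split; apply atan_increasing; lra. }
  exists (atan u / 2). split; [lra|].
  intros theta htheta p q hzq hzp hrho hp hq hpq hqp.
  destruct (tan_lt_of_lt_atan u theta ltac:(lra)) as [ht htu].
  assert (ht8 : tan theta * (8 * (a + 1)) < 1).
  { assert (tan theta * (8 * (a + 1)) < u * (8 * (a + 1))) by (apply Rmult_lt_compat_r; lra).
    unfold u in *. rewrite Rinv_l in * by lra. lra. }
  destruct (separated_excess a p q ha hpq) as [Lp [hLp [hballp hescp]]].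
  destruct (separated_excess a q p ha hqp) as [Lq [hLq [hballq hescq]]].
  pose proof (cone_separated_zc_lt a (tan theta) Lp p q ha ht ltac:(nra) ltac:(nra)
               hp hq hzq hzp hrho hLp hballp hescp) as hz.
  split; [exact hz|].
  pose proof (cone_separated_rho_lt a (tan theta) Lq p q ha ht ltac:(nra) ltac:(nra)
               hp hq ltac:(lra) hzp hrho hLq hballq hescq) as hr.
  assert (hcos : cos theta <> 0) by (apply Rgt_not_eq, cos_gt_0; pose proof PI_RGT_0; lra).
  apply (Rmult_lt_reg_r (1 + tan theta * tan theta)); [nra|].
  rewrite Rmult_assoc, cos_2a_mul_tan by exact hcos. exact hr.
Qed.
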